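(* Let $A$ be a compatible real alternative $^*$-algebra. Then: (1) the norm function $n$ takes values in the nucleus of $A$; (2) for all $x,y\in A$, $(x,x^c,y)=0$. As a consequence, the $^*$-subalgebra generated by any two elements $x,y\in A$ is associative.
   Context: A real alternative $^*$-algebra is a real vector space $A$ with a bilinear product and a unit $1$ (with $\mathbb{R}$ identified with $\mathbb{R}1$) such that the associator $(x,y,z)=(xy)z-x(yz)$ is an alternating function, equipped with a $^*$-involution $x\mapsto x^c$, i.e. a real linear map with $(x^c)^c=x$, $(xy)^c=y^cx^c$ and $r^c=r$ for $r\in\mathbb{R}$. The trace is $t(x)=x+x^c$ and the norm is $n(x)=xx^c$. The nucleus of $A$ is $\{r\in A:(r,x,y)=0\ \forall x,y\in A\}$. $A$ is called compatible if $t$ takes values in the nucleus of $A$. *)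

From HB Require Import structures.
From mathcomp Require Import all_boot all_order all_algebra.
From mathcomp Require Export reals.
Set Implicit Arguments. Unset Strict Implicit. Unset Printing Implicit Defensive.
Import Order.TTheory GRing.Theory Num.Theory.
Local Open Scope ring_scope.

Section AltStar.
Variables (R : realType) (V : lmodType R).
Variables (mul : V -> V -> V) (one : V) (conj : V -> V).

Definition assoc (x y z : V) : V := mul (mul x y) z - mul x (mul y z).

Definition tr (x : V) : V := x + conj x.
Definition nrm (x : V) : V := mul x (conj x).

Definition nucleus (r : V) : Prop := forall x y, assoc r x y = 0.

Record is_real_alt_star_alg : Prop := {
  mul_linl : forall (a : R) x y z, mul (a *: x + y) z = a *: mul x z + mul y z;
  mul_linr : forall (a : R) x y z, mul z (a *: x + y) = a *: mul z x + mul z y;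
  mul1x : forall x, mul one x = x;
  mulx1 : forall x, mul x one = x;
  one_neq0 : one != 0;                    (* R is identified with R1 *)
  assoc_alt12 : forall x y, assoc x x y = 0;
  assoc_alt23 : forall x y, assoc y x x = 0;
  assoc_alt13 : forall x y, assoc x y x = 0;
  conj_lin : forall (a : R) x y, conj (a *: x + y) = a *: conj x + conj y;
  conjK : forall x, conj (conj x) = x;
  conjM : forall x y, conj (mul x y) = mul (conj y) (conj x);
  conj_real : forall r : R, conj (r *: one) = r *: one
}.

Definition compatible : Prop := forall x, nucleus (tr x).

Inductive gen_star_subalg (x y : V) : V -> Prop :=
  | gs_one : gen_star_subalg x y one
  | gs_x : gen_star_subalg x y x
  | gs_y : gen_star_subalg x y y
  | gs_add : forall u v, gen_star_subalg x y u -> gen_star_subalg x y v ->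
      gen_star_subalg x y (u + v)
  | gs_scale : forall (a : R) u, gen_star_subalg x y u -> gen_star_subalg x y (a *: u)
  | gs_mul : forall u v, gen_star_subalg x y u -> gen_star_subalg x y v ->
      gen_star_subalg x y (mul u v)
  | gs_conj : forall u, gen_star_subalg x y u -> gen_star_subalg x y (conj u).

End AltStar.

From HB Require Import structures.
From mathcomp Require Import all_boot all_order all_algebra reals.
From mathcomp Require Import zify.
Set Implicit Arguments. Unset Strict Implicit. Unset Printing Implicit Defensive.
Import GRing.Theory Num.Theory.
Local Open Scope ring_scope.

(* Since the trace is nuclear, x^c = t(x) - x; hence (x, x^c, y) = -(x, x, y) = 0
   and t(x x^c) = 2 x x^c is nuclear.  For the last part, x^c = t(x) - x shows that
   the *-subalgebra generated by x and y is spanned by products of x, y and nuclear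
   elements.  Artin's argument goes through for such monomials: by induction on the
   total degree, the Teichmueller identity applied to the four cyclic rotations of
   (ab, c, d) yields 3 (ab, c, d) = 0 once all associators of lower degree vanish. *)

Lemma natmul_eq0 (K : numFieldType) (U : lmodType K) (w : U) n :
  (0 < n)%N -> w *+ n = 0 -> w = 0.
Proof.
move=> n_gt0 wn0; have nz : (n%:R : K) != 0 by rewrite pnatr_eq0 -lt0n.
by rewrite -[w]scale1r -(mulVf nz) -scalerA scaler_nat wn0 scaler0.
Qed.

Lemma cycle4_relations_mulrn3 (U : zmodType) (X Y Z W : U) :
  X - Y + Z = 0 -> Y - Z + W = 0 -> Z - W + X = 0 -> W - X + Y = 0 -> X *+ 3 = 0.
Proof.
move=> /eqP; rewrite addrAC subr_eq0 => /eqP <-.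
rewrite addrK addrC => /eqP; rewrite addr_eq0 => /eqP ->.
rewrite opprK => h3.
rewrite addrA (addrAC (W + W)) addrK addrC => /eqP; rewrite addr_eq0 => /eqP Ze.
by move: h3; rewrite Ze !mulrS mulr0n addr0 addrA.
Qed.

Section AlternativeStarAlgebra.
Variables (R : realType) (V : lmodType R).
Variables (mul : V -> V -> V) (one : V) (conj : V -> V).
Hypothesis HA : is_real_alt_star_alg mul one conj.

Local Notation a3 := (assoc mul).

Lemma amul0l z : mul 0 z = 0.
Proof.
have := mul_linl HA 1 0 0 z; rewrite !scale1r addr0 => h.
by apply/eqP; rewrite -(addrI (mul 0 z) (etrans (addr0 _) h)).
Qed.

Lemma amul0r z : mul z 0 = 0.
Proof.
have := mul_linr HA 1 0 0 z; rewrite !scale1r addr0 => h.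
by apply/eqP; rewrite -(addrI (mul z 0) (etrans (addr0 _) h)).
Qed.

Lemma amulDl x y z : mul (x + y) z = mul x z + mul y z.
Proof. by have := mul_linl HA 1 x y z; rewrite !scale1r. Qed.

Lemma amulDr x y z : mul z (x + y) = mul z x + mul z y.
Proof. by have := mul_linr HA 1 x y z; rewrite !scale1r. Qed.

Lemma amulZl a x z : mul (a *: x) z = a *: mul x z.
Proof. by have := mul_linl HA a x 0 z; rewrite !addr0 amul0l addr0. Qed.

Lemma amulZr a x z : mul z (a *: x) = a *: mul z x.
Proof. by have := mul_linr HA a x 0 z; rewrite !addr0 amul0r addr0. Qed.

Lemma amulBl x y z : mul (x - y) z = mul x z - mul y z.
Proof. by rewrite amulDl -scaleN1r amulZl scaleN1r. Qed.

Lemma amulBr x y z : mul z (x - y) = mul z x - mul z y.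
Proof. by rewrite amulDr -scaleN1r amulZr scaleN1r. Qed.

Lemma assocDl u v y z : a3 (u + v) y z = a3 u y z + a3 v y z.
Proof. by rewrite /assoc !amulDl opprD addrACA. Qed.

Lemma assocDm u v y z : a3 y (u + v) z = a3 y u z + a3 y v z.
Proof. by rewrite /assoc amulDr amulDl amulDl amulDr opprD addrACA. Qed.

Lemma assocDr u v y z : a3 y z (u + v) = a3 y z u + a3 y z v.
Proof. by rewrite /assoc !amulDr opprD addrACA. Qed.

Lemma assocZl a u y z : a3 (a *: u) y z = a *: a3 u y z.
Proof. by rewrite /assoc !amulZl scalerBr. Qed.

Lemma assocZm a u y z : a3 y (a *: u) z = a *: a3 y u z.
Proof. by rewrite /assoc !amulZr !amulZl amulZr scalerBr. Qed.

Lemma assocZr a u y z : a3 y z (a *: u) = a *: a3 y z u.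
Proof. by rewrite /assoc !amulZr scalerBr. Qed.

Lemma assocBm u v y z : a3 y (u - v) z = a3 y u z - a3 y v z.
Proof. by rewrite assocDm -scaleN1r assocZm scaleN1r. Qed.

Lemma assoc_swap12 x y z : a3 x y z = - a3 y x z.
Proof.
have := assoc_alt12 HA (x + y) z.
rewrite assocDl !assocDm !(assoc_alt12 HA) add0r addr0 => /eqP.
by rewrite addr_eq0 => /eqP.
Qed.

Lemma assoc_swap23 x y z : a3 x y z = - a3 x z y.
Proof.
have := assoc_alt23 HA (y + z) x.
rewrite assocDm !assocDr !(assoc_alt23 HA) add0r addr0 => /eqP.
by rewrite addr_eq0 => /eqP.
Qed.

Lemma assoc_cycle x y z : a3 x y z = a3 y z x.
Proof. by rewrite assoc_swap12 assoc_swap23 opprK. Qed.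

Lemma teichmuller a b c d :
  a3 (mul a b) c d - a3 a (mul b c) d + a3 a b (mul c d)
  = mul a (a3 b c d) + mul (a3 a b c) d.
Proof.
rewrite /assoc amulBr amulBl.
set P1 := mul (mul (mul a b) c) d; set P2 := mul (mul a b) (mul c d).
set P3 := mul (mul a (mul b c)) d; set P4 := mul a (mul (mul b c) d).
set P5 := mul a (mul b (mul c d)).
rewrite opprB (addrC (P4 - P5)) -!addrA; congr (_ + _).
by rewrite (addrCA P4) (addrCA P4) (addrCA (- P3) P2) addKr.
Qed.

Lemma nucleus_assoc_m r u v : nucleus mul r -> a3 u r v = 0.
Proof. by move=> nr; rewrite assoc_swap12 nr oppr0. Qed.

Lemma nucleus_assoc_r r u v : nucleus mul r -> a3 u v r = 0.
Proof. by move=> nr; rewrite -assoc_cycle nr. Qed.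

Lemma nucleus_one : nucleus mul one.
Proof. by move=> u v; rewrite /assoc !(mul1x HA) subrr. Qed.

Lemma nucleus_double u : nucleus mul (u + u) -> nucleus mul u.
Proof.
by move=> nuu a b; apply: (@natmul_eq0 _ _ _ 2) => //; rewrite mulr2n -assocDl nuu.
Qed.

Lemma conj_trB u : conj u = tr conj u - u.
Proof. by rewrite /tr addrC addKr. Qed.

Hypothesis Hcompat : compatible mul conj.

Lemma nucleus_nrm x : nucleus mul (nrm mul conj x).
Proof.
apply: nucleus_double; have := Hcompat (nrm mul conj x).
by rewrite /tr {2}/nrm (conjM HA) (conjK HA).
Qed.

Lemma assoc_conj x y : a3 x (conj x) y = 0.
Proof. by rewrite conj_trB assocBm (assoc_alt12 HA) subr0 nucleus_assoc_m. Qed.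

Variables x y : V.

Definition generator (u : V) : Prop := [\/ u = x, u = y | nucleus mul u].

Inductive monomial : nat -> V -> Prop :=
| monomial_gen u : generator u -> monomial 1 u
| monomial_mul i j u v : monomial i u -> monomial j v -> monomial (i + j) (mul u v).

Lemma monomial_deg_gt0 i u : monomial i u -> (0 < i)%N.
Proof. by elim=> // i' j u' v _ i'_gt0 _ _; rewrite addn_gt0 i'_gt0. Qed.

Lemma monomialP i u : monomial i u ->
  generator u \/ exists i1 i2 a b,
    [/\ i = (i1 + i2)%N, u = mul a b, monomial i1 a & monomial i2 b].
Proof. by case=> [u' gu|i1 i2 a b ha hb]; [left | right; exists i1, i2, a, b]. Qed.

Lemma assoc_generator p q r : generator p -> generator q -> generator r -> a3 p q r = 0.
Proof.
case=> [->|->|np] [->|->|nq] [->|->|nr];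
  by [ apply: (assoc_alt12 HA) | apply: (assoc_alt23 HA) | apply: (assoc_alt13 HA)
     | apply: np | apply: nucleus_assoc_m | apply: nucleus_assoc_r ].
Qed.

Lemma assoc_rotations_eq0 a b c d : a3 b c d = 0 -> a3 a b c = 0 ->
  a3 (mul a b) c d - a3 (mul b c) d a + a3 (mul c d) a b = 0.
Proof.
move=> bcd0 abc0; have := teichmuller a b c d.
rewrite bcd0 abc0 amul0r amul0l addr0 => <-.
by rewrite -(assoc_cycle a (mul b c) d) -(assoc_cycle b (mul c d) a)
  -(assoc_cycle a b (mul c d)).
Qed.

Lemma assoc_mul_monomial n
  (IH : forall i j k p q r, monomial i p -> monomial j q -> monomial k r ->
        (i + j + k <= n)%N -> a3 p q r = 0)
  ia ib ic id a b c d : monomial ia a -> monomial ib b -> monomial ic c ->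
  monomial id d -> (ia + ib + ic + id <= n.+1)%N -> a3 (mul a b) c d = 0.
Proof.
move=> ha hb hc hd deg.
have [[[ia_gt0 ib_gt0] ic_gt0] id_gt0] := (monomial_deg_gt0 ha,
  monomial_deg_gt0 hb, monomial_deg_gt0 hc, monomial_deg_gt0 hd).
have abc0 : a3 a b c = 0 by apply: (IH _ _ _ _ _ _ ha hb hc); lia.
have bcd0 : a3 b c d = 0 by apply: (IH _ _ _ _ _ _ hb hc hd); lia.
have cda0 : a3 c d a = 0 by apply: (IH _ _ _ _ _ _ hc hd ha); lia.
have dab0 : a3 d a b = 0 by apply: (IH _ _ _ _ _ _ hd ha hb); lia.
apply: (@natmul_eq0 _ _ _ 3) => //; apply: cycle4_relations_mulrn3.
- exact: assoc_rotations_eq0 bcd0 abc0.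
- exact: assoc_rotations_eq0 cda0 bcd0.
- exact: assoc_rotations_eq0 dab0 cda0.
- exact: assoc_rotations_eq0 abc0 dab0.
Qed.

Lemma assoc_monomial n i j k p q r : monomial i p -> monomial j q ->
  monomial k r -> (i + j + k <= n)%N -> a3 p q r = 0.
Proof.
elim: n i j k p q r => [|n IH] i j k p q r hp hq hr deg.
  by have := monomial_deg_gt0 hp; lia.
have [|_] := leqP (i + j + k) n; first exact: IH hp hq hr.
case: (monomialP hp) => [gp|[i1 [i2 [a [b [ei -> ha hb]]]]]].
  case: (monomialP hq) => [gq|[j1 [j2 [a [b [ej -> ha hb]]]]]].
    case: (monomialP hr) => [gr|[k1 [k2 [a [b [ek -> ha hb]]]]]].
      exact: assoc_generator.
    by rewrite -assoc_cycle; apply: (assoc_mul_monomial IH ha hb hp hq); lia.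
  by rewrite assoc_cycle; apply: (assoc_mul_monomial IH ha hb hr hp); lia.
by apply: (assoc_mul_monomial IH ha hb hq hr); lia.
Qed.

Inductive monomial_span : V -> Prop :=
| span_monomial n u : monomial n u -> monomial_span u
| span_add u v : monomial_span u -> monomial_span v -> monomial_span (u + v)
| span_scale (a : R) u : monomial_span u -> monomial_span (a *: u).

Lemma monomial_span_mul u v :
  monomial_span u -> monomial_span v -> monomial_span (mul u v).
Proof.
move=> hu; elim: hu v => [n u' hu|u1 u2 _ IH1 _ IH2|a u' _ IH] v; last 2 first.
- by move=> hv; rewrite amulDl; apply: span_add; [apply: IH1 | apply: IH2].
- by move=> hv; rewrite amulZl; apply: span_scale; apply: IH.
elim=> [n' v' hv|v1 v2 _ IH1 _ IH2|a v' _ IH].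
- exact: span_monomial (monomial_mul hu hv).
- by rewrite amulDr; apply: span_add.
- by rewrite amulZr; apply: span_scale.
Qed.

Lemma gen_star_subalg_span u : gen_star_subalg mul one conj x y u -> monomial_span u.
Proof.
have gen_span t : generator t -> monomial_span t.
  by move=> gt; apply: (span_monomial (monomial_gen gt)).
elim=> [|||u1 u2 _ h1 _ h2|a u' _ h|u1 u2 _ h1 _ h2|u' _ h].
- by apply: gen_span; apply: Or33; apply: nucleus_one.
- by apply: gen_span; apply: Or31.
- by apply: gen_span; apply: Or32.
- exact: span_add.
- exact: span_scale.
- exact: monomial_span_mul.
- rewrite conj_trB -scaleN1r; apply: span_add; last exact: span_scale.
  by apply: gen_span; apply: Or33; apply: Hcompat.
Qed.

Lemma assoc_monomial_span u v w :
  monomial_span u -> monomial_span v -> monomial_span w -> a3 u v w = 0.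
Proof.
move=> hu; elim: hu v w => [i p hp|u1 u2 _ IH1 _ IH2|a u' _ IH] v w; last first.
- by move=> hv hw; rewrite assocZl IH // scaler0.
- by move=> hv hw; rewrite assocDl IH1 // IH2 // addr0.
move=> hv; elim: hv w => [j q hq|v1 v2 _ IH1 _ IH2|a v' _ IH] w; last first.
- by move=> hw; rewrite assocZm IH // scaler0.
- by move=> hw; rewrite assocDm IH1 // IH2 // addr0.
elim=> [k r hr|w1 w2 _ IH1 _ IH2|a w' _ IH]; last first.
- by rewrite assocZr IH scaler0.
- by rewrite assocDr IH1 IH2 addr0.
exact: (assoc_monomial hp hq hr (leqnn _)).
Qed.

End AlternativeStarAlgebra.

Theorem theorem1p10 (R : realType) (V : lmodType R)
    (mul : V -> V -> V) (one : V) (conj : V -> V)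
    (HA : is_real_alt_star_alg mul one conj)
    (Hcompat : compatible mul conj) :
  (forall x : V, nucleus mul (nrm mul conj x)) /\
  (forall x y : V, assoc mul x (conj x) y = 0) /\
  (forall x y : V, forall u v w : V,
      gen_star_subalg mul one conj x y u ->
      gen_star_subalg mul one conj x y v ->
      gen_star_subalg mul one conj x y w ->
      assoc mul u v w = 0).
Proof.
split; first exact: nucleus_nrm HA Hcompat.
split; first exact: assoc_conj HA Hcompat.
move=> x y u v w hu hv hw.
by apply: (@assoc_monomial_span _ _ _ _ _ HA x y); apply: (gen_star_subalg_span HA Hcompat).
Qed.
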